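(* Let $M\subseteq Q_q^n$ ($n\ge 2$) be an MDS code with $\overline{0}\in M$, and let $G$ be a subgroup of $\mathrm{Ist}(M)$ acting transitively on $M$ such that for all $\overline\tau=(\tau_1,\dots,\tau_n),\overline\pi=(\pi_1,\dots,\pi_n)\in G$, the equality $\overline\tau(\overline{0})=\overline\pi(\overline{0})$ implies $\tau_1=\pi_1$. Then $G$ acts regularly on $M$ (in particular $|G|=|M|$), so $M$ is topolinear with regular group $G$.
   Context: $Q_q$ is a finite set of size $q$ containing $0$; $Q_q^n$ is the Hamming space of $n$-tuples, $\overline 0$ the all-zero tuple. An MDS code (with code distance 2) of length $n$ is a set $M\subseteq Q_q^n$ with $|M|=q^{n-1}$ and any two distinct elements at Hamming distance at least 2. An isotopism is a map $\overline{x}\mapsto(\tau_1x_1,\dots,\tau_nx_n)$ with $\tau_i$ permutations of $Q_q$; $\mathrm{Ist}(M)$ is the group of isotopisms mapping $M$ onto $M$. $M$ is topolinear if $\mathrm{Ist}(M)$ contains a subgroup of cardinality $|M|$ acting transitively on $M$. *)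

From HB Require Import structures.
From mathcomp Require Import all_boot all_order all_fingroup.
Set Implicit Arguments. Unset Strict Implicit. Unset Printing Implicit Defensive.

Definition word (Q : finType) (n : nat) := {ffun 'I_n -> Q}.

Definition hamming (Q : finType) (n : nat) (x y : {ffun 'I_n -> Q}) : nat :=
  #|[set i | x i != y i]|.

(* MDS code with code distance 2 over alphabet Q (q = #|Q|). *)
Definition MDS2 (Q : finType) (n : nat) (M : {set {ffun 'I_n -> Q}}) : Prop :=
  #|M| = (#|Q| ^ n.-1)%N /\
  (forall x y, x \in M -> y \in M -> x != y -> 2 <= hamming x y).

Definition iso_fun (Q : finType) (n : nat) (tau : {ffun 'I_n -> {perm Q}})
  (x : {ffun 'I_n -> Q}) : {ffun 'I_n -> Q} := [ffun i => tau i (x i)].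

Definition is_iso_by (Q : finType) (n : nat) (tau : {ffun 'I_n -> {perm Q}})
  (p : {perm {ffun 'I_n -> Q}}) : Prop :=
  forall x, p x = iso_fun tau x.

(* Ist(M) (the boolean test below is the decidable form of exists tau, is_iso_by tau p) *)
Definition Ist (Q : finType) (n : nat) (M : {set {ffun 'I_n -> Q}}) :
  {set {perm {ffun 'I_n -> Q}}} :=
  [set p : {perm {ffun 'I_n -> Q}} | [exists tau : {ffun 'I_n -> {perm Q}}, [forall x, p x == iso_fun tau x]] && (p @: M == M)].

Definition topolinear (Q : finType) (n : nat) (M : {set {ffun 'I_n -> Q}}) : Prop :=
  exists H : {group {perm {ffun 'I_n -> Q}}},
    [/\ H \subset Ist M, #|H| = #|M| & [transitive H, on M | 'P]].

From HB Require Import structures.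
From mathcomp Require Import all_boot all_order all_fingroup.

(* Write 0 for the all-z word, a codeword by hypothesis.
   1. Since M has size #|Q|^(n-1) and minimum distance 2, deleting any one
      coordinate is a bijection from M onto Q^(n-1): two codewords agreeing
      off one coordinate coincide, and every word agrees off a chosen
      coordinate with some codeword (a counting argument).
   2. Consequently an isotopism (tau_1,...,tau_n) of M fixing a codeword c
      and with tau_1 = id is the identity: for i <> 1 and b in Q, take the
      codeword y agreeing off coordinate 1 with the word equal to c except
      for b at coordinate i; the image of y agrees with y off coordinate i,
      hence equals y, so tau_i b = b.
   3. The hypothesis (applied with pi = id) says every element of G fixing 0
      has tau_1 = id, so by 2 the stabiliser of 0 in G is trivial.
   4. For a transitive action, a trivial stabiliser at one point means all
      stabilisers are trivial (they are conjugate), and then the orbit-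
      stabiliser formula gives #|G| = #|M|; G itself witnesses topolinearity. *)

Section PunctureBijection.
Variables (Q : finType) (n : nat) (M : {set {ffun 'I_n -> Q}}).
Hypothesis mdsM : MDS2 M.

Lemma mds_eq_off (i : 'I_n) (x y : {ffun 'I_n -> Q}) :
  x \in M -> y \in M -> (forall j, j != i -> x j = y j) -> x = y.
Proof.
move=> xM yM eq_off; apply/eqP/negPn/negP => neq_xy.
have diff_sub : [set j | x j != y j] \subset [set i].
  apply/subsetP => j; rewrite !inE; apply: contraR => /eq_off ->.
  by rewrite eqxx.
have := leq_trans ((proj2 mdsM) x y xM yM neq_xy) (subset_leq_card diff_sub).
by rewrite cards1.
Qed.

(* Words with a prescribed value at coordinate i make up a #|Q|-th part of
   Q^n: pairing a letter with such a word, placed at i, is injective. *)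
Lemma card_coord_fixed (i : 'I_n) (c : Q) :
  #|Q| * #|[set x : {ffun 'I_n -> Q} | x i == c]| <= #|Q| ^ n.
Proof.
set S := [set x : {ffun 'I_n -> Q} | x i == c].
pose put (p : Q * {ffun 'I_n -> Q}) : {ffun 'I_n -> Q} :=
  [ffun j => if j == i then p.1 else p.2 j].
have put_inj : {in setX [set: Q] S &, injective put}.
  move=> [b y] [b' y']; rewrite !inE /= => /eqP yi /eqP y'i eq_put.
  have at_j j : (if j == i then b else y j) = (if j == i then b' else y' j).
    by have := congr1 (fun f : {ffun 'I_n -> Q} => f j) eq_put; rewrite !ffunE.
  have eq_b : b = b' by have := at_j i; rewrite eqxx.
  congr pair => //; apply/ffunP => j; have := at_j j.
  by case: eqP => [->|] //; rewrite yi y'i.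
rewrite -(cardsT Q) -cardsX -(card_in_imset put_inj).
by rewrite cardsT -[X in _ <= _ ^ X]card_ord -card_ffun max_card.
Qed.

Lemma mds_puncture (i : 'I_n) (w : {ffun 'I_n -> Q}) :
  exists2 y, y \in M & forall j, j != i -> y j = w j.
Proof.
pose c := w i; set S := [set x : {ffun 'I_n -> Q} | x i == c].
pose reset (y : {ffun 'I_n -> Q}) : {ffun 'I_n -> Q} :=
  [ffun j => if j == i then c else y j].
have reset_inj : {in M &, injective reset}.
  move=> x y xM yM eq_reset; apply: (@mds_eq_off i x y xM yM) => j ji.
  have := congr1 (fun f : {ffun 'I_n -> Q} => f j) eq_reset.
  by rewrite !ffunE (negbTE ji).
have reset_sub : reset @: M \subset S.
  by apply/subsetP => _ /imsetP[y _ ->]; rewrite inE ffunE eqxx.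
have n_gt0 : 0 < n := leq_ltn_trans (leq0n i) (ltn_ord i).
have reset_onto : reset @: M = S.
  apply/eqP; rewrite eqEcard reset_sub (card_in_imset reset_inj) (proj1 mdsM).
  have Q_gt0 : 0 < #|Q| by apply/card_gt0P; exists c.
  by rewrite -(leq_pmul2l Q_gt0) -expnS prednK // card_coord_fixed.
have : w \in S by rewrite inE.
rewrite -reset_onto => /imsetP[y yM w_eq]; exists y => // j ji.
by rewrite w_eq ffunE (negbTE ji).
Qed.

Lemma isotopism_fixing_codeword (k : {perm {ffun 'I_n -> Q}})
    (tau : {ffun 'I_n -> {perm Q}}) (i0 : 'I_n) (c : {ffun 'I_n -> Q}) :
  is_iso_by tau k -> k @: M = M -> c \in M -> k c = c -> tau i0 = 1%g ->
  k = 1%g.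
Proof.
move=> k_tau kM cM kc tau_i0.
have tau_c j : tau j (c j) = c j.
  by have := congr1 (fun f : {ffun 'I_n -> Q} => f j) kc; rewrite k_tau ffunE.
have tau_id i : tau i = 1%g.
  have [-> // | i_i0] := eqVneq i i0.
  apply/permP => b; rewrite perm1.
  pose w : {ffun 'I_n -> Q} := [ffun j => if j == i then b else c j].
  have [y yM y_w] := mds_puncture i0 w.
  have y_i : y i = b by rewrite y_w // ffunE eqxx.
  have y_c j : j != i -> j != i0 -> y j = c j.
    by move=> ji j_i0; rewrite y_w // ffunE (negbTE ji).
  have ky : k y = y.
    have kyM : k y \in M by rewrite -kM imset_f.
    apply: (@mds_eq_off i _ _ kyM yM) => j ji; rewrite k_tau ffunE.
    have [-> | j_i0] := eqVneq j i0; first by rewrite tau_i0 perm1.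
    by rewrite y_c // tau_c.
  have := congr1 (fun f : {ffun 'I_n -> Q} => f i) ky.
  by rewrite k_tau ffunE y_i.
apply/permP => x; rewrite perm1 k_tau; apply/ffunP => j.
by rewrite ffunE tau_id perm1.
Qed.

End PunctureBijection.

Lemma IstP {Q : finType} {n : nat} {M : {set {ffun 'I_n -> Q}}}
    {p : {perm {ffun 'I_n -> Q}}} :
  p \in Ist M -> exists2 tau, is_iso_by tau p & p @: M = M.
Proof.
rewrite inE => /andP[/existsP[tau /forallP p_tau] /eqP pM].
by exists tau => // x; apply/eqP.
Qed.

Lemma iso_by_one (Q : finType) (n : nat) :
  is_iso_by [ffun _ => 1%g] (1%g : {perm {ffun 'I_n -> Q}}).
Proof. by move=> x; apply/ffunP => j; rewrite perm1 !ffunE perm1. Qed.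

(* A transitive action whose stabiliser at one point is trivial is regular:
   every stabiliser is a conjugate of that one, and the orbit-stabiliser
   formula then identifies the group with the orbit. *)
Lemma transitive_regular {aT : finGroupType} {T : finType}
    {to : {action aT &-> T}} {G : {group aT}} {S : {set T}} {a : T} :
  [transitive G, on S | to] -> a \in S ->
  (forall k, k \in G -> to a k = a -> k = 1%g) ->
  (forall g x, g \in G -> x \in S -> to x g = x -> g = 1%g) /\ #|G| = #|S|.
Proof.
move=> G_trans aS stab_a.
have stab g x : g \in G -> x \in S -> to x g = x -> g = 1%g.
  move=> gG xS gx; have := xS; rewrite -(atransP G_trans a aS).
  case/orbitP => h hG ah.
  have conj_fix : to a (h * g * h^-1)%g = a by rewrite !actM ah gx -ah actK.
  have := stab_a _ (groupM (groupM hG gG) (groupVr hG)) conj_fix.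
  by move/(canRL (mulgK h^-1)%g)/(canRL (mulKg h)); rewrite mul1g mulgV.
split=> //.
rewrite -(card_orbit_stab to G a) (atransP G_trans a aS).
suff -> : 'C_G[a | to]%g = 1%g by rewrite cards1 muln1.
apply/trivgP/subsetP => k /setIP[kG /astab1P ka].
by rewrite (stab_a k kG ka) inE.
Qed.

Theorem proposition7 (Q : finType) (z : Q) (n : nat)
  (M : {set {ffun 'I_n -> Q}}) (G : {group {perm {ffun 'I_n -> Q}}}) :
  (2 <= n)%N ->
  MDS2 M ->
  [ffun _ => z] \in M ->
  G \subset Ist M ->
  [transitive G, on M | 'P] ->
  (forall (g h : {perm {ffun 'I_n -> Q}}) (tau pi : {ffun 'I_n -> {perm Q}})
          (i1 : 'I_n),
      g \in G -> h \in G -> is_iso_by tau g -> is_iso_by pi h ->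
      nat_of_ord i1 = 0%N ->
      g [ffun _ => z] = h [ffun _ => z] -> tau i1 = pi i1) ->
  [/\ (forall g x, g \in G -> x \in M -> g x = x -> g = 1%g),
      #|G| = #|M| &
      topolinear M].
Proof.
move=> n_ge2 mdsM zeroM G_Ist G_trans first_coord.
pose i1 : 'I_n := Ordinal (ltnW n_ge2).
have stab_zero k : k \in G -> 'P%act [ffun _ => z] k = [ffun _ => z] -> k = 1%g.
  move=> kG /= k_zero; have [tau k_tau kM] := IstP (subsetP G_Ist k kG).
  apply: (@isotopism_fixing_codeword _ _ _ mdsM _ _ i1 _ k_tau kM zeroM k_zero).
  have := first_coord k 1%g tau _ i1 kG (group1 G) k_tau (iso_by_one Q n).
  by rewrite perm1 ffunE; apply.
have [semiregular cardG] := transitive_regular G_trans zeroM stab_zero.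
by split=> //; exists G.
Qed.
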